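(* Let $\Gamma$ be a finite ordinal potential game with profile set $S$. A state $s^*\in S$ is strongly maximal if and only if there is no advancement path in the ordinal deployment graph of $\Gamma$ whose first vertex is $s^*$.
   Context: A finite strategic-form game $\Gamma=(I,(S_i)_{i\in I},(u_i)_{i\in I})$ has finite player set $I$, finite nonempty strategy sets $S_i$, utilities $u_i:S\to\mathbb{R}$, $S=\prod_i S_i$; $(s_i',s_{-i})$ denotes $s$ with player $i$'s strategy replaced by $s_i'$. A function $P:S\to\mathbb{R}$ is an ordinal potential if for all $i$, $a,b\in S_i$, $\sigma_{-i}\in S_{-i}$: $u_i(a,\sigma_{-i})>u_i(b,\sigma_{-i})\iff P(a,\sigma_{-i})>P(b,\sigma_{-i})$; $\Gamma$ is an ordinal potential game if one exists. The ordinal deployment graph has vertex set $S$ and an arc $(s,s')$, $s'\neq s$, iff $s'=(s_i',s_{-i})$ for some $i$ with $u_i(s')\ge u_i(s)$; the arc is positive if $u_i(s')>u_i(s)$ and neutral otherwise. An advancement path is a directed path in the ordinal deployment graph containing at least one positive arc. Define $s\succeq s'$ iff there is a directed path (possibly of length $0$) from $s'$ to $s$, and $s\succ s'$ iff $s\succeq s'$ and not $s'\succeq s$. A state $s^*$ is strongly maximal if there is no $s$ with $s\succ s^*$. *)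

From HB Require Import structures.
From mathcomp Require Import all_boot all_order all_algebra.
Set Implicit Arguments. Unset Strict Implicit. Unset Printing Implicit Defensive.
Import Order.TTheory GRing.Theory Num.Theory.
Local Open Scope ring_scope.

Definition profile (I : finType) (S : I -> finType) : finType :=
  {dffun forall i : I, S i}.

Section Game.
Variables (R : realFieldType) (I : finType) (S : I -> finType).
Variable u : I -> profile S -> R.

Definition dev (i : I) (s t : profile S) : bool :=
  [forall j, (j != i) ==> (s j == t j)].

Definition ordinal_potential (P : profile S -> R) : Prop :=
  forall (i : I) (s t : profile S), dev i s t ->
    (u i s > u i t <-> P s > P t).

Definition arc (s t : profile S) : bool :=
  (t != s) && [exists i, dev i s t && (u i s <= u i t)].
Definition pos_arc (s t : profile S) : bool :=
  (t != s) && [exists i, dev i s t && (u i s < u i t)].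

Definition dpath (x : profile S) (p : seq (profile S)) : bool :=
  path arc x p && uniq (x :: p).

Definition advancement_path (x : profile S) (p : seq (profile S)) : bool :=
  dpath x p && has (fun e => pos_arc e.1 e.2) (zip (x :: p) p).

(* s ⪰ s' : a directed path (possibly of length 0) from s' to s *)
Definition succeq (s s' : profile S) : Prop :=
  exists p, dpath s' p /\ last s' p = s.
Definition succ (s s' : profile S) : Prop := succeq s s' /\ ~ succeq s' s.
Definition strongly_maximal (s : profile S) : Prop := ~ exists t, succ t s.

End Game.

From Pilot Require Import Defs.
From HB Require Import structures.
From mathcomp Require Import all_boot all_order all_algebra.
Import Order.TTheory GRing.Theory Num.Theory.
Set Implicit Arguments. Unset Strict Implicit. Unset Printing Implicit Defensive.
Local Open Scope ring_scope.

(* An ordinal potential is weakly increasing along arcs and strictly increasing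
   along positive arcs, so an advancement path from s ends at a state t with
   P s < P t, from which no path can return to s: t is strictly above s.
   Conversely, a path without positive arcs consists of neutral arcs, each of
   which is also an arc in the opposite direction, so such a path can be
   walked backwards and its endpoint is not strictly above its start. *)

Section DeploymentGraph.
Variables (R : realFieldType) (I : finType) (S : I -> finType).
Variable u : I -> profile S -> R.

Local Notation arc := (Defs.arc u).
Local Notation pos_arc := (Defs.pos_arc u).
Local Notation has_pos_arc x p := (has (fun e => pos_arc e.1 e.2) (zip (x :: p) p)).

Lemma dev_sym i (s t : profile S) : dev i s t -> dev i t s.
Proof.
move=> /forallP dev_st; apply/forallP=> j; apply/implyP=> ji.
by rewrite eq_sym (implyP (dev_st j) ji).
Qed.

Lemma neutral_arc_sym (a b : profile S) : arc a b -> ~~ pos_arc a b -> arc b a.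
Proof.
case/andP=> ba /existsP [i /andP [dev_ab le_ab]].
rewrite /Defs.pos_arc ba negb_exists => /forallP /(_ i).
rewrite dev_ab -leNgt => le_ba.
rewrite /Defs.arc eq_sym ba; apply/existsP; exists i.
by rewrite dev_sym // (le_trans le_ba le_ab) lexx.
Qed.

Lemma neutral_path_rev (x : profile S) p :
  path arc x p -> ~~ has_pos_arc x p -> path (fun a b => arc b a) x p.
Proof.
elim: p x => [|y p IHp] x //=.
case/andP=> arc_xy path_yp; rewrite negb_or => /andP [neutral_xy neutral_p].
by rewrite neutral_arc_sym // IHp.
Qed.

Lemma neutral_dpath_succeq (x : profile S) p :
  dpath u x p -> ~~ has_pos_arc x p -> succeq u x (last x p).
Proof.
case/andP=> path_xp uniq_xp neutral_p; exists (rev (belast x p)); split.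
  rewrite /dpath rev_path neutral_path_rev //=.
  by rewrite mem_rev rev_uniq -rcons_uniq -lastI.
by case: p {path_xp uniq_xp neutral_p} => [|y p] //=; rewrite rev_cons last_rcons.
Qed.

Variable P : profile S -> R.
Hypothesis P_potential : ordinal_potential u P.

Lemma arc_potential_le (a b : profile S) : arc a b -> P a <= P b.
Proof.
case/andP=> _ /existsP [i /andP [dev_ab le_ab]].
rewrite leNgt; apply/negP => /(proj2 (P_potential dev_ab)).
by rewrite ltNge le_ab.
Qed.

Lemma pos_arc_potential_lt (a b : profile S) : pos_arc a b -> P a < P b.
Proof.
case/andP=> _ /existsP [i /andP [dev_ab lt_ab]].
exact: (proj1 (P_potential (dev_sym dev_ab))).
Qed.

Lemma path_potential_le (x : profile S) p : path arc x p -> P x <= P (last x p).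
Proof.
elim: p x => [|y p IHp] x //= /andP [arc_xy path_yp].
exact: le_trans (arc_potential_le arc_xy) (IHp y path_yp).
Qed.

Lemma advancement_potential_lt (x : profile S) p :
  path arc x p -> has_pos_arc x p -> P x < P (last x p).
Proof.
elim: p x => [|y p IHp] x //= /andP [arc_xy path_yp] /orP [pos_xy | pos_p].
  exact: lt_le_trans (pos_arc_potential_lt pos_xy) (path_potential_le path_yp).
exact: le_lt_trans (arc_potential_le arc_xy) (IHp y path_yp pos_p).
Qed.

Lemma advancement_path_succ (x : profile S) p :
  advancement_path u x p -> succ u (last x p) x.
Proof.
case/andP=> dpath_xp pos_p; split; first by exists p.
case=> q [/andP [path_q _] last_q].
have := path_potential_le path_q; rewrite last_q leNgt.
by rewrite (advancement_potential_lt (proj1 (andP dpath_xp)) pos_p).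
Qed.

End DeploymentGraph.

Theorem lemma1 (R : realFieldType) (I : finType) (S : I -> finType)
  (HS : forall i : I, (0 < #|S i|)%N) (u : I -> profile S -> R)
  (Hpot : exists P : profile S -> R, ordinal_potential u P)
  (s : profile S) :
  strongly_maximal u s <-> ~ (exists p : seq (profile S), advancement_path u s p).
Proof.
have [P P_potential] := Hpot.
split=> [s_max [p adv_p] | no_adv [t [[p [dpath_p <-]] not_back]]].
  by apply: s_max; exists (last s p); apply: (advancement_path_succ P_potential adv_p).
case pos_p: (has (fun e => pos_arc u e.1 e.2) (zip (s :: p) p)).
  by apply: no_adv; exists p; rewrite /advancement_path dpath_p pos_p.
by apply/not_back/neutral_dpath_succeq; rewrite ?pos_p.
Qed.
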